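(* Let $M=(S,\mathrm{Act},P)$ be an MDP, $T\subseteq S$, $\mathrm{opt}\in\{\min,\max\}$, $r$ the least fixed point of $\tilde D^{\mathrm{opt}}$, $Z=\{s\in S\mid\Pr^{\mathrm{opt}}_s(\Diamond T)=0\}$, and $\sigma$ a strategy with $\Pr^\sigma_s(\Diamond T)=\Pr^{\mathrm{opt}}_s(\Diamond T)$ for all $s\in S$. For $s\in S$ let $z(s)$ be the probability, in the Markov chain induced by $\sigma$ started at $s$, of the set of paths $s_0s_1\ldots$ for which there is $i$ with $s_i\in Z$ and $s_j\notin T$ for all $j<i$. Then for all $s\in S$: $z(s)>0$ implies $r(s)<\infty$.
   Context: An MDP is a tuple $M=(S,\mathrm{Act},P)$ with $S$ finite, $\mathrm{Act}$ finite, $P\colon S\times\mathrm{Act}\times S\to[0,1]$ with $\sum_{s'}P(s,a,s')\in\{0,1\}$; $\mathrm{Act}(s)=\{a\mid\sum_{s'}P(s,a,s')=1\}$ is nonempty for all $s$; $\mathrm{Post}(s,a)=\{s'\mid P(s,a,s')>0\}$. A strategy is $\sigma\colon S\to\mathrm{Act}$ with $\sigma(s)\in\mathrm{Act}(s)$, inducing a Markov chain with transitions $P(s,\sigma(s),\cdot)$; $\Pr^\sigma_s(\Diamond T)$ is the probability of visiting $T$ from $s$ and $\Pr^{\mathrm{opt}}_s(\Diamond T)=\mathrm{opt}_\sigma\Pr^\sigma_s(\Diamond T)$. $\mathbb{N}_\infty=\mathbb{N}\cup\{\infty\}$ with $\infty+1=\infty$. $\tilde D^{\mathrm{opt}}(r)(s)=\infty$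 for $s\in T$ and $\mathrm{opt}_{a\in\mathrm{Act}(s)}\big(\min_{s'\in\mathrm{Post}(s,a)}r(s')+[\exists u,v\in\mathrm{Post}(s,a)\colon r(u)\ne r(v)]\big)$ for $s\notin T$ ($[\varphi]\in\{0,1\}$ the Iverson bracket); its least fixed point w.r.t. the pointwise order exists. *)

From HB Require Import structures.
From mathcomp Require Import all_boot all_order all_algebra.
From mathcomp Require Import classical_sets boolp reals.
Set Implicit Arguments. Unset Strict Implicit. Unset Printing Implicit Defensive.
Import Order.TTheory GRing.Theory Num.Theory.
Local Open Scope ring_scope.

(** Extended naturals N_oo = nat + {oo}; [None] is oo. *)
Definition ninf := option nat.
Definition ninf_le (x y : ninf) : bool :=
  match x, y with
  | _, None => true
  | None, Some _ => false
  | Some m, Some n => (m <= n)%N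
  end.
Definition ninf_add1 (x : ninf) (b : bool) : ninf :=
  match x with None => None | Some n => Some (n + b)%N end.
Definition ninf_min (x y : ninf) : ninf := if ninf_le x y then x else y.
Definition ninf_max (x y : ninf) : ninf := if ninf_le x y then y else x.

Inductive optT := Omin | Omax.

Section MDP.
Variables (R : realType) (S A : finType).
Variable P : S -> A -> S -> R.

Definition is_mdp : Prop :=
  [/\ (forall s a s', 0 <= P s a s' <= 1),
      (forall s a, \sum_(s' : S) P s a s' = 0 \/ \sum_(s' : S) P s a s' = 1)
    & (forall s, exists a, \sum_(s' : S) P s a s' = 1)].

Definition enabled (s : S) (a : A) : bool := \sum_(s' : S) P s a s' == 1.
Definition Post (s : S) (a : A) : seq S := [seq s' <- enum S | 0 < P s a s'].

Definition strategy (sigma : S -> A) : Prop := forall s, enabled s (sigma s).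

Fixpoint reachn (sigma : S -> A) (T : {set S}) (n : nat) (s : S) : R :=
  if s \in T then 1 else
  match n with
  | 0 => 0
  | n'.+1 => \sum_(s' : S) P s (sigma s) s' * reachn sigma T n' s'
  end.

(** Pr^sigma_s(<> T): measure of the increasing union of the events
    "T reached within n steps" *)
Definition PrReach (sigma : S -> A) (T : {set S}) (s : S) : R :=
  sup (range (fun n => reachn sigma T n s)).

Definition PrOpt (opt : optT) (T : {set S}) (s : S) : R :=
  let V := [set x : R | exists sigma, strategy sigma /\ x = PrReach sigma T s]%classic in
  match opt with Omin => inf V | Omax => sup V end.

(** probability, in the chain induced by sigma, of the paths that visit Z
    at some position i while avoiding T at all positions j < i; bounded version *)
Fixpoint untiln (sigma : S -> A) (T : {set S}) (Z : set S) (n : nat) (s : S) : R :=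
  if `[< Z s >] then 1 else
  if s \in T then 0 else
  match n with
  | 0 => 0
  | n'.+1 => \sum_(s' : S) P s (sigma s) s' * untiln sigma T Z n' s'
  end.

Definition PrUntil (sigma : S -> A) (T : {set S}) (Z : set S) (s : S) : R :=
  sup (range (fun n => untiln sigma T Z n s)).

Definition Dtilde (opt : optT) (T : {set S}) (r : S -> ninf) (s : S) : ninf :=
  if s \in T then None else
  let val_a a :=
    ninf_add1 (foldr ninf_min None [seq r s' | s' <- Post s a])
              [exists u, exists v, [&& 0 < P s a u, 0 < P s a v & r u != r v]] in
  let acts := [seq a <- enum A | enabled s a] in
  match opt with
  | Omin => foldr (fun a acc => ninf_min (val_a a) acc) None acts
  | Omax => foldr (fun a acc => ninf_max (val_a a) acc) (Some 0%N) acts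
  end.

Definition is_lfp (f : (S -> ninf) -> S -> ninf) (r : S -> ninf) : Prop :=
  (forall s, f r s = r s) /\
  (forall r', (forall s, f r' s = r' s) -> forall s, ninf_le (r s) (r' s)).

End MDP.

From HB Require Import structures.
From mathcomp Require Import all_boot all_order all_algebra.
From mathcomp Require Import classical_sets boolp reals.
From mathcomp Require Import zify.
Import Order.TTheory GRing.Theory Num.Theory.
Set Implicit Arguments. Unset Strict Implicit. Unset Printing Implicit Defensive.

(* Let v be the probability of reaching T under sigma. Paths that enter Z
   before T never reach T afterwards, since v vanishes on Z; so z(s) > 0
   forces v(s) < 1. Give every state with v < 1 the rank "number of states of
   strictly smaller value", and rank oo to the states with v = 1 (among them T).
   Optimality of sigma makes v excessive for the relevant actions a at t
   (sigma(t) for min, every enabled action for max): sum_u P(t,a,u) v(u) <= v(t).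
   Hence either some successor has a smaller value, hence a smaller rank, or all
   successors have value v(t), hence the same rank. Either way the rank is a
   pre-fixpoint of D^opt, so the least fixpoint r lies below it and r(s) < oo. *)

Section ExtendedNaturals.
Implicit Types x y z : ninf.

Lemma ninf_le_refl x : ninf_le x x.
Proof. by case: x => //= n; rewrite leqnn. Qed.

Lemma ninf_le_trans y x z : ninf_le x y -> ninf_le y z -> ninf_le x z.
Proof. by case: x => [a|]; case: y => [b|]; case: z => [c|] //=; lia. Qed.

Lemma ninf_le_anti x y : ninf_le x y -> ninf_le y x -> x = y.
Proof. by case: x => [a|]; case: y => [b|] //= h1 h2; congr Some; lia. Qed.

Lemma ninf_le_None x : ninf_le x None.
Proof. by case: x. Qed.

Lemma ninf_min_le_l x y : ninf_le (ninf_min x y) x.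
Proof.
rewrite /ninf_min; case: ifP => [_|]; first exact: ninf_le_refl.
by case: x => [a|]; case: y => [b|] //=; lia.
Qed.

Lemma ninf_min_le_r x y : ninf_le (ninf_min x y) y.
Proof. by rewrite /ninf_min; case: ifP => // _; exact: ninf_le_refl. Qed.

Lemma ninf_max_le x y z : ninf_le x z -> ninf_le y z -> ninf_le (ninf_max x y) z.
Proof. by rewrite /ninf_max; case: ifP. Qed.

Lemma ninf_min_le2 x x' y y' : ninf_le x x' -> ninf_le y y' ->
  ninf_le (ninf_min x y) (ninf_min x' y').
Proof.
rewrite /ninf_min; case: x => [a|]; case: x' => [a'|]; case: y => [b|];
  case: y' => [b'|] //=; repeat case: ifP => //=; lia.
Qed.

Lemma ninf_max_le2 x x' y y' : ninf_le x x' -> ninf_le y y' ->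
  ninf_le (ninf_max x y) (ninf_max x' y').
Proof.
rewrite /ninf_max; case: x => [a|]; case: x' => [a'|]; case: y => [b|];
  case: y' => [b'|] //=; repeat case: ifP => //=; lia.
Qed.

Variable I : eqType.
Implicit Types (f g : I -> ninf) (l : seq I).

Lemma foldr_min_le f l b :
  b \in l -> ninf_le (foldr (fun a => ninf_min (f a)) None l) (f b).
Proof.
elim: l => //= a l IH; rewrite in_cons => /orP [/eqP ->|/IH].
  exact: ninf_min_le_l.
exact/ninf_le_trans/ninf_min_le_r.
Qed.

Lemma foldr_min_attained f l :
  foldr (fun a => ninf_min (f a)) None l = None \/
  exists2 b, b \in l & foldr (fun a => ninf_min (f a)) None l = f b.
Proof.
elim: l => /= [|a l [->|[b bl ->]]]; first by left.
  by right; exists a; rewrite ?mem_head // /ninf_min ninf_le_None.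
right; rewrite /ninf_min; case: ifP => _; first by exists a; rewrite ?mem_head.
by exists b; rewrite // in_cons bl orbT.
Qed.

Lemma foldr_min_le2 f g l : (forall a, ninf_le (f a) (g a)) ->
  ninf_le (foldr (fun a => ninf_min (f a)) None l)
          (foldr (fun a => ninf_min (g a)) None l).
Proof. by move=> fg; elim: l => //= a l IH; apply: ninf_min_le2. Qed.

Lemma foldr_max_le2 f g l z : (forall a, ninf_le (f a) (g a)) ->
  ninf_le (foldr (fun a => ninf_max (f a)) z l)
          (foldr (fun a => ninf_max (g a)) z l).
Proof.
by move=> fg; elim: l => /= [|a l IH]; [exact: ninf_le_refl|apply: ninf_max_le2].
Qed.

Lemma foldr_max_le f l z c :
  (forall a, a \in l -> ninf_le (f a) c) -> ninf_le z c ->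
  ninf_le (foldr (fun a => ninf_max (f a)) z l) c.
Proof.
elim: l => //= a l IH fc zc; apply: ninf_max_le; first by rewrite fc ?mem_head.
by apply: IH => // b bl; rewrite fc // in_cons bl orbT.
Qed.

End ExtendedNaturals.

Section LeastFixpoint.
Variables (S : finType) (f : (S -> ninf) -> S -> ninf).

Definition ninf_monotone : Prop := forall r1 r2,
  (forall s, ninf_le (r1 s) (r2 s)) -> forall s, ninf_le (f r1 s) (f r2 s).

Definition pre_fixpoint (y : S -> ninf) : Prop := forall s, ninf_le (f y s) (y s).

Definition inf_pre_fixpoints (s : S) : ninf :=
  match pselect (exists k, `[< exists2 y, pre_fixpoint y & y s = Some k >]) with
  | left ex_k => Some (ex_minn ex_k)
  | right _ => None
  end.

Lemma inf_pre_fixpoints_le y s :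
  pre_fixpoint y -> ninf_le (inf_pre_fixpoints s) (y s).
Proof.
move=> pre_y; case ys: (y s) => [k|]; last exact: ninf_le_None.
rewrite /inf_pre_fixpoints; case: pselect => [ex_k|[]]; last first.
  by exists k; apply/asboolP; exists y.
by case: ex_minnP => n _ /= -> //; apply/asboolP; exists y.
Qed.

Hypothesis f_mono : ninf_monotone.

Lemma pre_fixpoint_inf : pre_fixpoint inf_pre_fixpoints.
Proof.
move=> s; rewrite {2}/inf_pre_fixpoints; case: pselect => [ex_k|_].
  case: ex_minnP => n /asboolP [y pre_y <-] _.
  apply: ninf_le_trans (pre_y s); apply: f_mono => t.
  exact: inf_pre_fixpoints_le.
exact: ninf_le_None.
Qed.

Lemma lfp_le_pre_fixpoint r y :
  is_lfp f r -> pre_fixpoint y -> forall s, ninf_le (r s) (y s).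
Proof.
move=> [_ r_least] pre_y s.
have fix_inf t : f inf_pre_fixpoints t = inf_pre_fixpoints t.
  apply: ninf_le_anti; first exact: pre_fixpoint_inf.
  by apply: inf_pre_fixpoints_le => u; apply/f_mono/pre_fixpoint_inf.
exact: ninf_le_trans (r_least _ fix_inf s) (inf_pre_fixpoints_le s pre_y).
Qed.

End LeastFixpoint.

Local Open Scope ring_scope.

Section Operator.
Variables (R : realType) (S A : finType) (P : S -> A -> S -> R).

Definition act_val (r : S -> ninf) (s : S) (a : A) : ninf :=
  ninf_add1 (foldr ninf_min None [seq r s' | s' <- Post P s a])
            [exists u, exists v, [&& 0 < P s a u, 0 < P s a v & r u != r v]].

Lemma DtildeE opt T r s : Dtilde P opt T r s =
  if s \in T then None else
  let acts := [seq a <- enum A | enabled P s a] in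
  match opt with
  | Omin => foldr (fun a => ninf_min (act_val r s a)) None acts
  | Omax => foldr (fun a => ninf_max (act_val r s a)) (Some 0%N) acts
  end.
Proof. by []. Qed.

Lemma mem_Post s a u : (u \in Post P s a) = (0 < P s a u).
Proof. by rewrite mem_filter mem_enum andbT. Qed.

Lemma act_val_mono r1 r2 s a : (forall u, ninf_le (r1 u) (r2 u)) ->
  ninf_le (act_val r1 s a) (act_val r2 s a).
Proof.
move=> r12; rewrite /act_val !foldr_map.
case: (foldr_min_attained r2 (Post P s a)) => [->|[y yPost ->]].
  exact: ninf_le_None.
case r2y: (r2 y) => [k|]; last exact: ninf_le_None.
have := ninf_le_trans (foldr_min_le r1 yPost) (r12 y); rewrite r2y.
case min1: (foldr _ _ _) => [j|] //= jk.
have [jk_lt|jk_eq] : (j < k)%N \/ j = k by lia.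
  by case: [exists _, _]; case: [exists _, _] => /=; lia.
subst k.
(* With equal minima, a successor where r1 exceeds the minimum is one where r2
   does too, so r2 is not constant on Post s a either. *)
case: existsP => [[u /existsP [v /and3P [pu pv ruv]]]|_] /=; last lia.
have [w pw r1w] : exists2 w, 0 < P s a w & r1 w != Some j.
  case: (eqVneq (r1 u) (Some j)) => [r1u|]; last by exists u.
  by exists v; rewrite // -r1u eq_sym.
have r2w : r2 w != Some j.
  have := foldr_min_le r1 (_ : w \in Post P s a); rewrite mem_Post min1 => /(_ pw).
  move: r1w (r12 w); case: (r1 w) => [i|] //=; case: (r2 w) => [i'|] //= /eqP ij ii' ji.
  by apply/eqP => -[ej]; apply: ij; congr Some; lia.
have -> /= : [exists u, exists v, [&& 0 < P s a u, 0 < P s a v & r2 u != r2 v]].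
  by apply/existsP; exists w; apply/existsP; exists y; rewrite pw -mem_Post yPost r2y r2w.
lia.
Qed.

Lemma Dtilde_mono opt T : ninf_monotone (Dtilde P opt T).
Proof.
move=> r1 r2 r12 s; rewrite !DtildeE; case: ifP => _; first exact: ninf_le_refl.
by case: opt; [apply: foldr_min_le2 | apply: foldr_max_le2] => a; apply: act_val_mono.
Qed.

End Operator.

Section Distribution.
Variables (R : realDomainType) (I : finType) (mu : I -> R).
Hypotheses (mu_ge0 : forall i, 0 <= mu i) (mu_sum1 : \sum_i mu i = 1).
Implicit Types (f : I -> R) (c : R).

Lemma avg_le f c : (forall i, f i <= c) -> \sum_i mu i * f i <= c.
Proof.
move=> fc; rewrite -[leRHS]mul1r -mu_sum1 mulr_suml.
by apply: ler_sum => i _; apply: ler_wpM2l.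
Qed.

Lemma avgDr f c : \sum_i mu i * (f i + c) = \sum_i mu i * f i + c.
Proof.
rewrite -[c in RHS]mul1r -mu_sum1 mulr_suml -big_split.
by apply: eq_bigr => i _; rewrite mulrDr.
Qed.

Lemma support_nonempty : exists i, 0 < mu i.
Proof.
apply: contrapT => /forallNP mu_le0; move: mu_sum1; rewrite big1 => [/eqP|i _].
  by rewrite eq_sym oner_eq0.
by apply/eqP; rewrite eq_le mu_ge0 andbT leNgt; apply/negP/mu_le0.
Qed.

Lemma avg_le_support_eq f c :
  (forall i, 0 < mu i -> c <= f i) -> \sum_i mu i * f i <= c ->
  forall i, 0 < mu i -> f i = c.
Proof.
move=> cf avg_c i mu_i; apply/le_anti; rewrite cf // andbT.
rewrite leNgt; apply/negP => ci.
have excess : 0 < \sum_j mu j * (f j - c).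
  rewrite (bigD1 i) //= ltr_pwDl ?mulr_gt0 ?subr_gt0 //.
  apply: sumr_ge0 => j _; have := mu_ge0 j; rewrite le_eqVlt => /orP [/eqP <-|mu_j].
    by rewrite mul0r.
  by rewrite mulr_ge0 ?subr_ge0 ?cf // ltW.
by move: excess; rewrite avgDr subr_gt0 ltNge avg_c.
Qed.

End Distribution.

Section Reachability.
Variables (R : realType) (S A : finType) (P : S -> A -> S -> R).
Hypothesis mdp : is_mdp P.
Implicit Types (T : {set S}) (s t u : S) (a : A).

Lemma P_ge0 s a u : 0 <= P s a u.
Proof. by case: mdp => P01 _ _; case/andP: (P01 s a u). Qed.

Lemma enabled_sum1 s a : enabled P s a -> \sum_u P s a u = 1.
Proof. exact: eqP. Qed.

Section Strategy.
Variables (tau : S -> A) (T : {set S}).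
Hypothesis tau_strategy : strategy P tau.

Let tau_sum1 s : \sum_u P s (tau s) u = 1.
Proof. exact/enabled_sum1/tau_strategy. Qed.

Lemma reachn_ge0 n s : 0 <= reachn P tau T n s.
Proof.
elim: n s => [|n IH] s /=; case: ifP => // _.
by apply: sumr_ge0 => u _; rewrite mulr_ge0 ?P_ge0.
Qed.

Lemma reachn_le1 n s : reachn P tau T n s <= 1.
Proof.
elim: n s => [|n IH] s /=; case: ifP => // _.
exact: avg_le (P_ge0 s (tau s)) (tau_sum1 s) _ _ IH.
Qed.

Lemma reachn_homo s : {homo reachn P tau T ^~ s : m n / (m <= n)%N >-> m <= n}.
Proof.
apply: homo_leq => [//|y x z|n]; first exact: le_trans.
elim: n s => [|n IH] s /=; case: ifP => // _.
  by apply: sumr_ge0 => u _; apply: mulr_ge0; [exact: P_ge0|exact: (reachn_ge0 0)].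
by apply: ler_sum => u _; apply: ler_wpM2l; [exact: P_ge0|exact: IH].
Qed.

Lemma has_sup_reachn s : has_sup (range (reachn P tau T ^~ s)).
Proof.
split; first by exists (reachn P tau T 0 s); exists 0%N.
by exists 1 => _ [n _ <-]; apply: reachn_le1.
Qed.

Lemma reachn_le_PrReach n s : reachn P tau T n s <= PrReach P tau T s.
Proof. by apply: sup_upper_bound (has_sup_reachn s) _ _; exists n. Qed.

Lemma PrReach_ge0 s : 0 <= PrReach P tau T s.
Proof. exact: le_trans (reachn_ge0 0 s) (reachn_le_PrReach 0 s). Qed.

Lemma PrReach_le1 s : PrReach P tau T s <= 1.
Proof.
apply: ge_sup; first by exists (reachn P tau T 0 s); exists 0%N.
by move=> _ [n _ <-]; apply: reachn_le1.
Qed.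

Lemma PrReach_in s : s \in T -> PrReach P tau T s = 1.
Proof.
move=> sT; apply/le_anti; rewrite PrReach_le1 /=.
by have := reachn_le_PrReach 0 s; rewrite /= sT.
Qed.

Lemma PrReach_step_le s : s \notin T ->
  \sum_u P s (tau s) u * PrReach P tau T u <= PrReach P tau T s.
Proof.
move=> sT; apply/ler_addgt0Pr => e e0.
have [N approx] : exists N, forall u, PrReach P tau T u <= reachn P tau T N u + e.
  have /choice [n_ n_approx] : forall u, exists n,
      PrReach P tau T u - e < reachn P tau T n u.
    by move=> u; have [_ [n _ <-]] := sup_adherent e0 (has_sup_reachn u); exists n.
  exists (\max_u n_ u)%N => u; rewrite -lerBlDr; apply/ltW/(lt_le_trans (n_approx u)).
  exact/reachn_homo/leq_bigmax.
apply: le_trans (lerD (reachn_le_PrReach N.+1 s) (lexx e)).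
rewrite /= (negbTE sT) -(avgDr (tau_sum1 s)).
by apply: ler_sum => u _; rewrite ler_wpM2l ?P_ge0.
Qed.

End Strategy.

Lemma reachn_add_untiln_le1 sig T (Z : set S) : strategy P sig ->
  (forall t, Z t -> PrReach P sig T t = 0) ->
  forall m n s, reachn P sig T n s + untiln P sig T Z m s <= 1.
Proof.
move=> sig_st Z0.
have reachn_Z n s : Z s -> reachn P sig T n s = 0.
  move=> Zs; apply/le_anti; rewrite reachn_ge0 // andbT -(Z0 s Zs).
  exact: reachn_le_PrReach.
elim=> [|m IH] n s /=; case: asboolP => [Zs|_]; try by rewrite reachn_Z ?add0r.
  by case: ifP; rewrite addr0 reachn_le1.
case: ifP => sT; first by rewrite addr0 reachn_le1.
apply: le_trans (lerD (reachn_homo sig T s (leqnSn n)) (lexx _)) _.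
rewrite /= sT -big_split /=.
under eq_bigr do rewrite -mulrDr.
exact/(avg_le (P_ge0 s (sig s)) (enabled_sum1 (sig_st s)))/IH.
Qed.

Lemma PrUntil_le sig T (Z : set S) s : strategy P sig ->
  (forall t, Z t -> PrReach P sig T t = 0) ->
  PrUntil P sig T Z s <= 1 - PrReach P sig T s.
Proof.
move=> sig_st Z0; apply: ge_sup; first by exists (untiln P sig T Z 0 s); exists 0%N.
move=> _ [m _ <-]; rewrite lerBrDl addrC -lerBrDl.
apply: ge_sup; first by exists (reachn P sig T 0 s); exists 0%N.
by move=> _ [n _ <-]; rewrite lerBrDl addrC reachn_add_untiln_le1.
Qed.

Lemma PrReach_le_PrOpt_max tau T t :
  strategy P tau -> PrReach P tau T t <= PrOpt P Omax T t.
Proof.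
move=> tau_st; apply: sup_upper_bound; last by exists tau.
split; first by exists (PrReach P tau T t), tau.
by exists 1 => _ [tau' [tau'_st ->]]; apply: PrReach_le1.
Qed.

(* Let tau play a at t and follow sig elsewhere. The gain d of sig over tau at t
   bounds the gain everywhere, because tau's reachability probability is
   excessive for tau; unfolding one step of tau at t then gives the claim. *)
Lemma PrReach_optimal_step_le sig T t a : strategy P sig ->
  (forall tau, strategy P tau -> PrReach P tau T t <= PrReach P sig T t) ->
  t \notin T -> enabled P t a ->
  \sum_u P t a u * PrReach P sig T u <= PrReach P sig T t.
Proof.
move=> sig_st sig_opt tT ta.
pose tau u := if u == t then a else sig u.
have tau_st : strategy P tau by move=> u; rewrite /tau; case: eqP => [->|].
pose w := PrReach P tau T; pose d := PrReach P sig T t - w t.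
have vt : PrReach P sig T t = w t + d by rewrite /d addrC subrK.
have d_ge0 : 0 <= d by rewrite subr_ge0 sig_opt.
have reachn_le n u : reachn P sig T n u <= w u + d.
  elim: n u => [|n IH] u; have [->|ne] := eqVneq u t;
    try by rewrite -vt reachn_le_PrReach.
    rewrite /=; case: ifP => uT; first by rewrite /w PrReach_in // lerDl.
    by rewrite addr_ge0 // /w PrReach_ge0.
  rewrite /=; case: ifP => uT; first by rewrite /w PrReach_in // lerDl.
  apply: le_trans (_ : \sum_u' P u (sig u) u' * (w u' + d) <= _).
    by apply: ler_sum => u' _; apply: ler_wpM2l; [exact: P_ge0|exact: IH].
  have <- : tau u = sig u by rewrite /tau (negbTE ne).
  by rewrite avgDr ?enabled_sum1 // lerD2r PrReach_step_le ?uT.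
have v_le u : PrReach P sig T u <= w u + d.
  apply: ge_sup; first by exists (reachn P sig T 0 u); exists 0%N.
  by move=> _ [n _ <-].
apply: le_trans (_ : \sum_u P t a u * (w u + d) <= _).
  by apply: ler_sum => u _; rewrite ler_wpM2l ?P_ge0 ?v_le.
have <- : tau t = a by rewrite /tau eqxx.
by rewrite avgDr ?enabled_sum1 // vt lerD2r PrReach_step_le.
Qed.

End Reachability.

Section Rank.
Variables (R : realType) (S A : finType) (P : S -> A -> S -> R).
Hypothesis mdp : is_mdp P.
Variable v : S -> R.
Hypothesis v_le1 : forall u, v u <= 1.

Definition rank (t : S) : ninf :=
  if v t == 1 then None else Some #|[set u | v u < v t]|.

Lemma rank_lt u t : v u < v t -> ninf_le (ninf_add1 (rank u) true) (rank t).
Proof.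
move=> vut; rewrite /rank; have [_|vt1] := eqVneq (v t) 1; first exact: ninf_le_None.
have -> /= : (v u == 1) = false by apply/lt_eqF/(lt_le_trans vut).
rewrite addn1; apply/proper_card/properP; split.
  by apply/fintype.subsetP => w; rewrite !inE => /lt_trans; apply.
by exists u; rewrite !inE ?ltxx.
Qed.

Lemma act_val_rank_le t a : enabled P t a -> \sum_u P t a u * v u <= v t ->
  ninf_le (act_val P rank t a) (rank t).
Proof.
move=> ta avg; case rt: (rank t) => [j|]; last exact: ninf_le_None.
rewrite /act_val foldr_map.
have Pta_ge0 := P_ge0 mdp t a; have Pta_sum1 := enabled_sum1 ta.
case: (pselect (exists2 u, 0 < P t a u & v u < v t)) => [[u pu vut]|no_lower].
  have := foldr_min_le rank (_ : u \in Post P t a); rewrite mem_Post => /(_ pu).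
  move: (rank_lt vut); rewrite rt; case: (rank u) => [i|] //= ij.
  by case: (foldr _ _ _) => [k|] //=; case: [exists _, _] => /=; lia.
have v_succ : forall u, 0 < P t a u -> v u = v t.
  apply: (avg_le_support_eq Pta_ge0 Pta_sum1) avg => w pw.
  by rewrite leNgt; apply/negP => vwt; apply: no_lower; exists w.
have rank_succ u : 0 < P t a u -> rank u = Some j.
  by move=> /v_succ vut; rewrite -rt /rank vut.
have -> : [exists u, exists w, [&& 0 < P t a u, 0 < P t a w & rank u != rank w]] = false.
  apply/negbTE/existsP => -[u /existsP [w /and3P [pu pw]]].
  by rewrite !rank_succ ?eqxx.
have [u0 pu0] := support_nonempty Pta_ge0 Pta_sum1.
case: (foldr_min_attained rank (Post P t a)) => [min_oo|[u uPost ->]].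
  have := foldr_min_le rank (_ : u0 \in Post P t a).
  by rewrite mem_Post min_oo rank_succ // => /(_ pu0).
by rewrite mem_Post in uPost; rewrite rank_succ //= addn0.
Qed.

Lemma rank_pre_fixpoint opt (T : {set S}) : (forall t, t \in T -> v t = 1) ->
  (forall t, t \notin T -> v t != 1 ->
     if opt is Omin then exists2 a, enabled P t a & \sum_u P t a u * v u <= v t
     else forall a, enabled P t a -> \sum_u P t a u * v u <= v t) ->
  pre_fixpoint (Dtilde P opt T) rank.
Proof.
move=> vT avg t; rewrite DtildeE; case: ifP => tT; first by rewrite /rank vT ?eqxx.
case: (eqVneq (v t) 1) => [vt1|vt1]; first by rewrite /rank vt1 eqxx ninf_le_None.
move: (avg t (negbT tT) vt1); clear avg; case: opt => /= [[a ta avg_a]|avg_all].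
  apply: ninf_le_trans (act_val_rank_le ta avg_a).
  by apply: foldr_min_le; rewrite mem_filter mem_enum ta.
apply: foldr_max_le => [a|]; last by rewrite /rank (negbTE vt1).
by rewrite mem_filter mem_enum andbT => ta; apply: act_val_rank_le ta (avg_all a ta).
Qed.

End Rank.

Theorem lemma11 (R : realType) (S A : finType) (P : S -> A -> S -> R)
  (T : {set S}) (opt : optT) (r : S -> ninf) (sigma : S -> A) :
  is_mdp P ->
  is_lfp (Dtilde P opt T) r ->
  strategy P sigma ->
  (forall s, PrReach P sigma T s = PrOpt P opt T s) ->
  forall s : S,
    0 < PrUntil P sigma T (fun t => PrOpt P opt T t = 0) s ->
    r s <> None.
Proof.
move=> mdp r_lfp sig_st sig_opt s z_pos.
pose v := PrReach P sigma T.
have Z0 t : PrOpt P opt T t = 0 -> v t = 0 by rewrite /v sig_opt.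
have vs1 : v s != 1.
  apply/eqP => vs1; have := lt_le_trans z_pos (PrUntil_le mdp s sig_st Z0).
  by rewrite -/v vs1 subrr ltxx.
have v_pre : pre_fixpoint (Dtilde P opt T) (rank v).
  apply: (rank_pre_fixpoint mdp) => [|t|t tT _]; first exact: PrReach_le1.
    exact: PrReach_in.
  clear -mdp sig_st sig_opt tT; case: opt sig_opt => sig_opt.
    by exists (sigma t); [exact: sig_st|exact: PrReach_step_le].
  move=> a ta; apply: PrReach_optimal_step_le => // tau tau_st.
  by rewrite sig_opt; apply: PrReach_le_PrOpt_max.
have := lfp_le_pre_fixpoint (Dtilde_mono P opt T) r_lfp v_pre s.
by rewrite /rank (negbTE vs1); case: (r s).
Qed.
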